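(* Let $\widetilde C$ be an $\mathcal S$-complex over $R$. Then the negative suspension $\Sigma^{-1}\widetilde C$ is $\mathcal S$-chain homotopy equivalent to $\widetilde C\otimes\widetilde{\mathcal O}(-1)$.
   Context: Let $R$ be a commutative ring. Graded modules are $\mathbb Z$-graded; $V[i]_j=V_{i+j}$; differentials have degree $-1$; $\epsilon$ is the sign map ($(-1)^i$ on degree $i$). An $\mathcal S$-complex over $R$ is a chain complex $(\widetilde C,\widetilde d)$ of finitely generated free graded $R$-modules with a graded decomposition $\widetilde C=C\oplus C[-1]\oplus\mathsf R$ in which $\widetilde d=\begin{pmatrix} d&0&0\\ v&-d&\delta_2\\ \delta_1&0&r\end{pmatrix}$. Let $\chi$ be the degree $1$ map sending $C$ identically onto $C[-1]$ and zero on $C[-1]\oplus\mathsf R$. A morphism is a degree $0$ chain map $\widetilde\lambda$ with $\chi'\widetilde\lambda=\widetilde\lambda\chi$; an $\mathcal S$-chain homotopy between morphisms is a degree $1$ map $\widetilde K$ with $\chi'\widetilde K+\widetilde K\chi=0$ and $\widetilde d'\widetilde K+\widetilde K\widetilde d$ equal to their difference; an $\mathcal S$-chain homotopy equivalence is a pair of morphisms whose composites are $\mathcal S$-chain homotopic to identities. The tensor product $\widetilde C\otimes\widetilde C'$ is the tensor product chain complex (differential $\widetilde d\otimes1+\epsilon\otimes\widetilde d'$) with $\chi^\otimes=\chi\otimes1+\epsilon\otimes\chi'$, an $\mathcal S$-complex with reducible summand $\mathsf R\otimes\mathsf R'$. The negative suspension $\Sigma^{-1}\widetilde C$ is the $\mathcal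 S$-complex $C_{\Sigma^{-1}}\oplus C_{\Sigma^{-1}}[-1]\oplus\mathsf R$ with $C_{\Sigma^{-1}}=C[2]\oplus\mathsf R[2]$ and, with respect to the ordered summands $C[2],\mathsf R[2],C[1],\mathsf R[1],\mathsf R$, differential $\widetilde d_{\Sigma^{-1}}=\begin{pmatrix} d&0&0&0&0\\ \delta_1&r&0&0&0\\ v&\delta_2&-d&0&0\\ 0&0&-\delta_1&-r&1\\ \delta_1v&\delta_1\delta_2&0&0&r\end{pmatrix}$ (the entry $1$ is the identity $\mathsf R\to\mathsf R[1]$). $\widetilde{\mathcal O}(-1)$ is the $\mathcal S$-complex with $C=R$ in degree $-2$, $\mathsf R=R$ in degree $0$, $d=v=\delta_1=r=0$ and $\delta_2:\mathsf R\to C$ the identity of $R$. *)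

From HB Require Import structures.
From mathcomp Require Import all_boot all_order all_algebra.
Set Implicit Arguments. Unset Strict Implicit. Unset Printing Implicit Defensive.
Import GRing.Theory.
Local Open Scope ring_scope.

(* A finitely generated free graded R-module, given by a finite homogeneous
   basis [gen] together with the degree of each basis element. *)
Record gmod := GMod { gen : finType; deg : gen -> int }.

(* Shift: V[i]_j = V_{i+j}; a generator of degree k of V has degree k - i in V[i]. *)
Definition shift (V : gmod) (i : int) : gmod := @GMod (gen V) (fun g => deg g - i).

Definition dsum (V W : gmod) : gmod :=
  @GMod (gen V + gen W)%type
    (fun x => match x with inl a => deg a | inr b => deg b end).

Definition tmod (V W : gmod) : gmod :=
  @GMod (gen V * gen W)%type (fun p => deg p.1 + deg p.2).

Section Defs.
Variable R : comPzRingType.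

(* An R-linear map V -> W, as its matrix in the given bases:
   [f i j] is the coefficient of the basis element i of W in f(j). *)
Definition gmap (V W : gmod) := gen W -> gen V -> R.

Definition has_degree (V W : gmod) (k : int) (f : gmap V W) :=
  forall i j, f i j != 0 -> deg i = deg j + k.

Definition mcomp (U V W : gmod) (f : gmap V W) (g : gmap U V) : gmap U W :=
  fun i k => \sum_(j : gen V) f i j * g j k.
Definition madd (V W : gmod) (f g : gmap V W) : gmap V W := fun i j => f i j + g i j.
Definition msub (V W : gmod) (f g : gmap V W) : gmap V W := fun i j => f i j - g i j.
Definition mzero (V W : gmod) : gmap V W := fun _ _ => 0.
Definition mid (V : gmod) : gmap V V := fun i j => (i == j)%:R.
Definition meq (V W : gmod) (f g : gmap V W) := forall i j, f i j = g i j.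

Definition sgnz (k : int) : R := if odd (absz k) then -1 else 1.
Definition eps (V : gmod) : gmap V V := fun i j => (i == j)%:R * sgnz (deg j).

(* Tensor product of maps (no extra signs; Koszul signs are explicit via eps). *)
Definition tmap (V V' W W' : gmod) (f : gmap V W) (g : gmap V' W')
  : gmap (tmod V V') (tmod W W') := fun i j => f i.1 j.1 * g i.2 j.2.

(* A graded free module with a (degree -1) differential and a (degree 1) map chi:
   the only data used by morphisms and homotopies of S-complexes. *)
Record dchi := DChi { dc_mod : gmod; dc_d : gmap dc_mod dc_mod; dc_chi : gmap dc_mod dc_mod }.
Arguments dc_d : clear implicits.
Arguments dc_chi : clear implicits.

Definition is_Smorph (A B : dchi) (l : gmap (dc_mod A) (dc_mod B)) :=
  [/\ has_degree 0 l,
      meq (mcomp (dc_d B) l) (mcomp l (dc_d A)) &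
      meq (mcomp (dc_chi B) l) (mcomp l (dc_chi A))].

Definition is_Shtpy (A B : dchi) (l l' K : gmap (dc_mod A) (dc_mod B)) :=
  [/\ has_degree 1 K,
      meq (madd (mcomp (dc_chi B) K) (mcomp K (dc_chi A))) (@mzero _ _) &
      meq (madd (mcomp (dc_d B) K) (mcomp K (dc_d A))) (msub l l')].

Definition S_htpy_equiv (A B : dchi) :=
  exists (f : gmap (dc_mod A) (dc_mod B)) (g : gmap (dc_mod B) (dc_mod A)),
    [/\ is_Smorph f, is_Smorph g,
        (exists K, is_Shtpy (mcomp g f) (@mid (dc_mod A)) K) &
        (exists K, is_Shtpy (mcomp f g) (@mid (dc_mod B)) K)].

Definition dtensor (A B : dchi) : dchi :=
  @DChi (tmod (dc_mod A) (dc_mod B))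
    (madd (tmap (dc_d A) (@mid (dc_mod B))) (tmap (@eps (dc_mod A)) (dc_d B)))
    (madd (tmap (dc_chi A) (@mid (dc_mod B))) (tmap (@eps (dc_mod A)) (dc_chi B))).

(* Data of an S-complex Ct = C + C[-1] + Rs with differential
   [[d,0,0],[v,-d,delta2],[delta1,0,r]]. *)
Record Sdata := SData {
  S_C : gmod; S_R : gmod;
  S_d : gmap S_C S_C;
  S_v : gmap S_C S_C;            (* C -> C[-1] *)
  S_delta1 : gmap S_C S_R;
  S_delta2 : gmap S_R S_C;       (* Rs -> C[-1] *)
  S_r : gmap S_R S_R }.
Arguments S_d : clear implicits.
Arguments S_v : clear implicits.
Arguments S_delta1 : clear implicits.
Arguments S_delta2 : clear implicits.
Arguments S_r : clear implicits.

Definition Stot (S : Sdata) : gmod := dsum (dsum (S_C S) (shift (S_C S) (-1))) (S_R S).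

Definition Sdiff (S : Sdata) : gmap (Stot S) (Stot S) :=
  fun (i j : (gen (S_C S) + gen (S_C S)) + gen (S_R S)) =>
  match i, j with
  | inl (inl a), inl (inl b) => S_d S a b
  | inl (inr a), inl (inl b) => S_v S a b
  | inl (inr a), inl (inr b) => - S_d S a b
  | inl (inr a), inr b => S_delta2 S a b
  | inr a, inl (inl b) => S_delta1 S a b
  | inr a, inr b => S_r S a b
  | _, _ => 0
  end.

Definition Schi (S : Sdata) : gmap (Stot S) (Stot S) :=
  fun (i j : (gen (S_C S) + gen (S_C S)) + gen (S_R S)) =>
  match i, j with
  | inl (inr a), inl (inl b) => (a == b)%:R
  | _, _ => 0
  end.

Arguments Sdiff : clear implicits.
Arguments Schi : clear implicits.

Definition Sdchi (S : Sdata) : dchi := @DChi (Stot S) (Sdiff S) (Schi S).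

Definition is_Scomplex (S : Sdata) :=
  has_degree (-1) (Sdiff S) /\ meq (mcomp (Sdiff S) (Sdiff S)) (@mzero _ _).

(* Negative suspension: C_Sigma = C[2] + Rs[2], reducible part Rs; ordered
   summands C[2], Rs[2], C[1], Rs[1], Rs. *)
Definition negsusp (S : Sdata) : Sdata :=
  let C := S_C S in let Rs := S_R S in
  let Cs := dsum (shift C 2) (shift Rs 2) in
  @SData Cs Rs
    (fun (i j : gen C + gen Rs) => match i, j with
       | inl a, inl b => S_d S a b
       | inr a, inl b => S_delta1 S a b
       | inr a, inr b => S_r S a b
       | _, _ => 0 end)
    (fun (i j : gen C + gen Rs) => match i, j with
       | inl a, inl b => S_v S a b
       | inl a, inr b => S_delta2 S a b
       | _, _ => 0 end)
    (fun (i : gen Rs) (j : gen C + gen Rs) => match j with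
       | inl b => mcomp (S_delta1 S) (S_v S) i b
       | inr b => mcomp (S_delta1 S) (S_delta2 S) i b end)
    (fun (i : gen C + gen Rs) (j : gen Rs) => match i with
       | inl _ => 0
       | inr a => (a == j)%:R end)
    (S_r S).

Definition Ominus1 : Sdata :=
  @SData (@GMod unit (fun _ => (-2)%R)) (@GMod unit (fun _ => 0%R))
    (fun _ _ => 0) (fun _ _ => 0) (fun _ _ => 0) (fun _ _ => 1) (fun _ _ => 0).

End Defs.

(* Write x, y, z for the generators of O~(-1) in degrees -2, -1, 0, so that
   d z = y and chi x = y.  The map f sends the summands C[2], R[2] of the
   suspension to (C (+) R) (x) x, the summands C[1], R[1] to C[-1] (x) x and
   eps (C (+) R) (x) y, and R to R (x) z, the first four corrected by v and
   delta2 in the z-component; g projects back and uses delta1 to absorb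
   C[-1] (x) x and C (x) y.  Then g f = 1, while the summands C[-1] (x) y and (C (+) C[-1]) (x) z
   killed by g form an acyclic part contracted by a degree one map K moving
   C[-1] (x) x, C (x) y, C[-1] (x) y onto (C (+) C[-1]) (x) z, so that
   f g - 1 = d K + K d and chi K + K chi = 0.  Every identity is checked
   entrywise, using only d~^2 = 0 and the degrees of the blocks of d~, which
   fix the signs. *)

From mathcomp Require Import all_boot all_order all_algebra.
From mathcomp Require Import ring zify.
From Stdlib Require Import FunctionalExtensionality.
Import GRing.Theory.
Local Open Scope ring_scope.

Section Sums.
Variable R : comPzRingType.

Lemma sum_pairE (I J : finType) (F : I * J -> R) :
  \sum_(p : I * J) F p = \sum_(j : J) \sum_(i : I) F (i, j).
Proof. by rewrite exchange_big pair_bigA; apply: eq_bigr => -[]. Qed.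

Lemma sum_unitE (F : unit -> R) : \sum_(i : unit) F i = F tt.
Proof. by rewrite (big_pred1 tt) // => -[]. Qed.

Lemma sum_delta_l (T : finType) (i : T) (F : T -> R) :
  \sum_k (i == k)%:R * F k = F i.
Proof.
rewrite (bigD1 i) //= eqxx mul1r big1 ?addr0 // => k.
by rewrite eq_sym => /negbTE ->; rewrite mul0r.
Qed.

Lemma sum_delta_lM (T : finType) (i : T) (G F : T -> R) :
  \sum_k (i == k)%:R * G k * F k = G i * F i.
Proof. under eq_bigr do rewrite -mulrA. exact: sum_delta_l. Qed.

Lemma sum_delta_r (T : finType) (i : T) (F : T -> R) :
  \sum_k F k * (k == i)%:R = F i.
Proof. under eq_bigr do rewrite mulrC eq_sym. exact: sum_delta_l. Qed.

Lemma sumr_mul0l (T : finType) (F : T -> R) : \sum_k 0 * F k = 0.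
Proof. by rewrite big1 // => k _; rewrite mul0r. Qed.

Lemma sumr_mul0r (T : finType) (F : T -> R) : \sum_k F k * 0 = 0.
Proof. by rewrite big1 // => k _; rewrite mulr0. Qed.

Lemma sumr_mulNl (T : finType) (F G : T -> R) : \sum_k - F k * G k = - \sum_k F k * G k.
Proof. by rewrite -sumrN; apply: eq_bigr => k _; rewrite mulNr. Qed.

Lemma sumr_mulNr (T : finType) (F G : T -> R) : \sum_k F k * - G k = - \sum_k F k * G k.
Proof. by rewrite -sumrN; apply: eq_bigr => k _; rewrite mulrN. Qed.

Lemma sumr_mulAr (T : finType) (F G : T -> R) (x : R) :
  \sum_k F k * (G k * x) = (\sum_k F k * G k) * x.
Proof. by rewrite mulr_suml; apply: eq_bigr => k _; rewrite mulrA. Qed.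

Lemma delta_neq0 (T : eqType) (x y : T) : (x == y)%:R != 0 :> R -> x = y.
Proof. by case: (x =P y) => // _; rewrite eqxx. Qed.

Lemma mulr_neq0l (x y : R) : x * y != 0 -> x != 0.
Proof. by apply: contra => /eqP ->; rewrite mul0r. Qed.

End Sums.

Section Signs.
Variable R : comPzRingType.

Lemma sgnzD (x y : int) : sgnz R (x + y) = sgnz R x * sgnz R y.
Proof.
rewrite /sgnz (_ : odd `|x + y| = odd `|x| (+) odd `|y|); last by lia.
by case: (odd `|x|); case: (odd `|y|); rewrite /= ?mulrNN ?mulN1r ?mul1r.
Qed.

Lemma sgnzN (k : int) : sgnz R (- k) = sgnz R k.
Proof. by rewrite /sgnz abszN. Qed.

Lemma sgnzB (x y : int) : sgnz R (x - y) = sgnz R x * sgnz R y.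
Proof. by rewrite sgnzD sgnzN. Qed.

Lemma sgnz1 : sgnz R 1 = -1. Proof. by []. Qed.

Lemma sgnzP (k : int) : sgnz R k = 1 \/ sgnz R k = -1.
Proof. by rewrite /sgnz; case: (odd _); [right | left]. Qed.

End Signs.

Lemma inl_eqE (A B : eqType) (x y : A) : (inl x == inl y :> A + B) = (x == y).
Proof. by []. Qed.

Lemma inr_eqE (A B : eqType) (x y : B) : (inr x == inr y :> A + B) = (x == y).
Proof. by []. Qed.

Lemma gmap_ext (R : comPzRingType) (V W : gmod) (f g : gmap R V W) : meq f g -> f = g.
Proof.
by move=> fg; apply: functional_extensionality => i; apply: functional_extensionality => j.
Qed.

Lemma Shtpy_mzero (R : comPzRingType) (A B : dchi R) (l l' : gmap R (dc_mod A) (dc_mod B)) :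
  meq l l' -> is_Shtpy l l' (@mzero _ _ _).
Proof.
move=> ll'; split=> [i j|i j|i j]; first by rewrite eqxx.
- by rewrite /madd /mcomp /mzero !big1 ?addr0 // => k _; rewrite ?mulr0 ?mul0r.
- by rewrite /madd /msub /mcomp /mzero !big1 ?addr0 ?ll' ?subrr // => k _; rewrite ?mulr0 ?mul0r.
Qed.

Notation inC a := (inl (inl a)).
Notation inCm a := (inl (inr a)).
Notation inRs b := (inr b).

Section NegSuspension.
Variable R : comPzRingType.
Variable S : Sdata R.
Hypothesis hdeg : has_degree (-1) (@Sdiff _ S).
Hypothesis hsq : meq (mcomp (@Sdiff _ S) (@Sdiff _ S)) (@mzero _ _ _).

Local Notation C := (gen (S_C S)).
Local Notation Rs := (gen (S_R S)).
Local Notation dd := (@S_d _ S).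
Local Notation vv := (@S_v _ S).
Local Notation d1 := (@S_delta1 _ S).
Local Notation d2 := (@S_delta2 _ S).
Local Notation rr := (@S_r _ S).

Lemma deg_d (c a : C) : dd c a != 0 -> deg c = deg a - 1.
Proof. by move/(hdeg (inC c) (inC a)). Qed.

Lemma deg_v (c a : C) : vv c a != 0 -> deg c = deg a - 2.
Proof. move/(hdeg (inCm c) (inC a)) => /=; lia. Qed.

Lemma deg_delta1 (b : Rs) (a : C) : d1 b a != 0 -> deg b = deg a - 1.
Proof. by move/(hdeg (inRs b) (inC a)). Qed.

Lemma deg_delta2 (c : C) (b : Rs) : d2 c b != 0 -> deg c = deg b - 2.
Proof. move/(hdeg (inCm c) (inRs b)) => /=; lia. Qed.

Lemma deg_r (b b' : Rs) : rr b b' != 0 -> deg b = deg b' - 1.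
Proof. by move/(hdeg (inRs b) (inRs b')). Qed.

Tactic Notation "sq0_entry" uconstr(i) uconstr(j) :=
  have := hsq (i : gen (Stot S)) (j : gen (Stot S));
  rewrite /mcomp /mzero !big_sumType /=;
  rewrite ?(sumr_mul0l, sumr_mul0r, sumr_mulNl, sumr_mulNr) ?(addr0, add0r).

Lemma d_sq0 (c a : C) : \sum_i dd c i * dd i a = 0.
Proof. by sq0_entry (inC c) (inC a). Qed.

Lemma dvE (c a : C) :
  \sum_i dd c i * vv i a = \sum_i vv c i * dd i a + \sum_i d2 c i * d1 i a.
Proof. by sq0_entry (inCm c) (inC a); move/eqP; rewrite addrAC subr_eq0 eq_sym => /eqP. Qed.

Lemma d_delta2E (c : C) (b : Rs) : \sum_i dd c i * d2 i b = \sum_i d2 c i * rr i b.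
Proof. by sq0_entry (inCm c) (inRs b); move/eqP; rewrite addrC subr_eq0 eq_sym => /eqP. Qed.

Lemma delta1_dE (b : Rs) (a : C) : \sum_i d1 b i * dd i a = - \sum_i rr b i * d1 i a.
Proof. by sq0_entry (inRs b) (inC a); move/eqP; rewrite addr_eq0 => /eqP. Qed.

Lemma r_sq0 (b b' : Rs) : \sum_i rr b i * rr i b' = 0.
Proof. by sq0_entry (inRs b) (inRs b'). Qed.

Lemma delta1_eps_d (b : Rs) (a : C) :
  \sum_i d1 b i * - sgnz R (deg i) * dd i a = (\sum_i d1 b i * dd i a) * sgnz R (deg a).
Proof.
rewrite mulr_suml; apply: eq_bigr => i _.
have [->|/deg_d ->] := eqVneq (dd i a) 0; first by rewrite !(mulr0, mul0r).
by rewrite sgnzB sgnz1; ring.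
Qed.

Lemma eps_StotE : @eps R (Stot S) = fun i j =>
  match i, j with
  | inC a, inC b => (a == b)%:R * sgnz R (@deg (S_C S) b)
  | inCm a, inCm b => (a == b)%:R * - sgnz R (@deg (S_C S) b)
  | inRs a, inRs b => (a == b)%:R * sgnz R (@deg (S_R S) b)
  | _, _ => 0
  end.
Proof.
apply: gmap_ext => -[[a|a]|a] [[b|b]|b]; rewrite /eps /= ?mul0r //.
by rewrite sgnzB sgnzN sgnz1 mulrN1.
Qed.

Local Notation TT := (dtensor (Sdchi S) (Sdchi (Ominus1 R))).
Local Notation TS := (Sdchi (negsusp S)).
(* The generators of O~(-1): [ox] spans its C, [oy] its C[-1], [oz] its R. *)
Local Notation ox := (inl (inl tt)).
Local Notation oy := (inl (inr tt)).
Local Notation oz := (inr tt).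
Local Notation inC2 a := (inl (inl (inl a))).
Local Notation inR2 b := (inl (inl (inr b))).
Local Notation inC1 a := (inl (inr (inl a))).
Local Notation inR1 b := (inl (inr (inr b))).

Ltac case_tensor_gen := move=> [[[?|?]|?] [[[]|[]]|[]]].
Ltac case_susp_gen := move=> [[[?|?]|[?|?]]|?].

Definition tensor_d : gmap R (dc_mod TT) (dc_mod TT) := fun i j =>
  match i, j with
  | (x, ox), (y, ox) | (x, oy), (y, oy) | (x, oz), (y, oz) => Sdiff x y
  | (x, oy), (y, oz) => @eps R _ x y
  | _, _ => 0
  end.

Definition tensor_chi : gmap R (dc_mod TT) (dc_mod TT) := fun i j =>
  match i, j with
  | (x, ox), (y, ox) | (x, oy), (y, oy) | (x, oz), (y, oz) => Schi x y
  | (x, oy), (y, ox) => @eps R _ x y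
  | _, _ => 0
  end.

Definition susp_d : gmap R (dc_mod TS) (dc_mod TS) := fun i j =>
  match i, j with
  | inC2 c, inC2 a => dd c a
  | inR2 c, inC2 a => d1 c a
  | inC1 c, inC2 a => vv c a
  | inRs c, inC2 a => mcomp d1 vv c a
  | inR2 c, inR2 b => rr c b
  | inC1 c, inR2 b => d2 c b
  | inRs c, inR2 b => mcomp d1 d2 c b
  | inC1 c, inC1 a => - dd c a
  | inR1 c, inC1 a => - d1 c a
  | inR1 c, inR1 b => - rr c b
  | inR1 c, inRs b => (c == b)%:R
  | inRs c, inRs b => rr c b
  | _, _ => 0
  end.

Definition susp_chi : gmap R (dc_mod TS) (dc_mod TS) := fun i j =>
  match i, j with
  | inC1 c, inC2 a => (c == a)%:R
  | inR1 c, inR2 b => (c == b)%:R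
  | _, _ => 0
  end.

Lemma tensor_dE : @dc_d _ TT = tensor_d.
Proof.
apply: gmap_ext; case_tensor_gen; case_tensor_gen.
all: by rewrite /= /madd /tmap /mid /eps /= ?(inl_eqE, inr_eqE, mulr1, mulr0, mul0r, mul1r, addr0, add0r, oppr0).
Qed.

Lemma tensor_chiE : @dc_chi _ TT = tensor_chi.
Proof.
apply: gmap_ext; case_tensor_gen; case_tensor_gen.
all: by rewrite /= /madd /tmap /mid /eps /= ?(inl_eqE, inr_eqE, mulr1, mulr0, mul0r, mul1r, addr0, add0r, oppr0).
Qed.

Lemma susp_dE : @dc_d _ TS = susp_d.
Proof.
apply: gmap_ext; case_susp_gen; case_susp_gen.
all: by rewrite /= ?(mulr1, mulr0, mul0r, mul1r, addr0, add0r, oppr0).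
Qed.

Lemma susp_chiE : @dc_chi _ TS = susp_chi.
Proof. by apply: gmap_ext; case_susp_gen; case_susp_gen. Qed.

Definition susp_to_tensor : gmap R (dc_mod TS) (dc_mod TT) := fun i j =>
  match i, j with
  | (inC c, ox), inC2 a => (c == a)%:R
  | (inC c, oz), inC2 a => vv c a
  | (inRs c, ox), inR2 b => (c == b)%:R
  | (inC c, oz), inR2 b => d2 c b
  | (inCm c, ox), inC1 a => (c == a)%:R
  | (inC c, oy), inC1 a => (c == a)%:R * sgnz R (@deg (S_C S) a)
  | (inCm c, oz), inC1 a => vv c a
  | (inRs c, oy), inR1 b => (c == b)%:R * sgnz R (@deg (S_R S) b)
  | (inCm c, oz), inR1 b => d2 c b
  | (inRs c, oz), inRs b => (c == b)%:R
  | _, _ => 0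
  end.

Definition tensor_to_susp : gmap R (dc_mod TT) (dc_mod TS) := fun i j =>
  match i, j with
  | inC2 c, (inC a, ox) => (c == a)%:R
  | inR2 c, (inRs b, ox) => (c == b)%:R
  | inC1 c, (inCm a, ox) => (c == a)%:R
  | inRs c, (inCm a, ox) => d1 c a
  | inRs c, (inC a, oy) => d1 c a * - sgnz R (@deg (S_C S) a)
  | inR1 c, (inRs b, oy) => (c == b)%:R * sgnz R (@deg (S_R S) b)
  | inRs c, (inRs b, oz) => (c == b)%:R
  | _, _ => 0
  end.

Definition tensor_htpy : gmap R (dc_mod TT) (dc_mod TT) := fun i j =>
  match i, j with
  | (inC c, oz), (inCm a, ox) => (c == a)%:R
  | (inC c, oz), (inC a, oy) => (c == a)%:R * - sgnz R (@deg (S_C S) a)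
  | (inCm c, oz), (inCm a, oy) => (c == a)%:R * sgnz R (@deg (S_C S) a)
  | _, _ => 0
  end.

Ltac degree_entry := let H := fresh "H" in move=> H;
  first [ by rewrite eqxx in H
        | (try move/mulr_neq0l: H => H);
          first [ move/delta_neq0: H => -> | move/deg_d: H => -> | move/deg_v: H => ->
                | move/deg_delta1: H => -> | move/deg_delta2: H => -> | move/deg_r: H => -> ];
          simpl; lia ].

Lemma susp_to_tensor_deg : has_degree 0 susp_to_tensor.
Proof. by case_tensor_gen; case_susp_gen; rewrite /=; degree_entry. Qed.

Lemma tensor_to_susp_deg : has_degree 0 tensor_to_susp.
Proof. by case_susp_gen; case_tensor_gen; rewrite /=; degree_entry. Qed.

Lemma tensor_htpy_deg : has_degree 1 tensor_htpy.
Proof. by case_tensor_gen; case_tensor_gen; rewrite /=; degree_entry. Qed.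

Ltac expand_entries :=
  rewrite /madd /msub /mid /mzero /mcomp /= ?sum_pairE /= ?big_sumType ?sum_unitE /= ?big_sumType /=;
  rewrite ?eps_StotE /= ?(xpair_eqE, inl_eqE, inr_eqE) /= ?(andbT, andbF, mulr0n, mulr1n, oppr0, subr0);
  try rewrite /mcomp;
  rewrite ?(sumr_mul0l, sumr_mul0r, sum_delta_l, sum_delta_lM, sum_delta_r, sumr_mulAr);
  rewrite ?(mulr1, mulr0, mul0r, mul1r, addr0, add0r, oppr0, opprK).

Ltac degcase := match goal with
  | |- context [dd ?x ?y] => case: (eqVneq (dd x y) 0) => [->|/deg_d ->]
  | |- context [vv ?x ?y] => case: (eqVneq (vv x y) 0) => [->|/deg_v ->]
  | |- context [d1 ?x ?y] => case: (eqVneq (d1 x y) 0) => [->|/deg_delta1 ->]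
  | |- context [d2 ?x ?y] => case: (eqVneq (d2 x y) 0) => [->|/deg_delta2 ->]
  | |- context [rr ?x ?y] => case: (eqVneq (rr x y) 0) => [->|/deg_r ->]
  end.

Ltac deltacase := match goal with
  | |- context [@eq_op _ ?x ?y] => case: eqP => [->|_];
    rewrite ?eqxx /= ?(mulr1n, mulr0n, oppr0, mul0r, mulr0, mul1r, mulr1, addr0, add0r, subr0)
  end.

Ltac signcase := match goal with
  | |- context [sgnz _ (@deg ?g ?x)] => case: (sgnzP R (@deg g x)) => ->
  end.

(* Signs [sgnz (deg i)] next to an entry of a block of d~ are rewritten through
   the degree of that block ([degcase]); what remains is a ring identity modulo
   the components of d~^2 = 0. *)
Ltac close_entry :=
  rewrite ?(sumr_mulNl, sumr_mulNr) ?delta1_eps_d ?(dvE, d_delta2E, delta1_dE, r_sq0, d_sq0);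
  repeat deltacase; try degcase; rewrite ?sgnzB ?sgnzD ?sgnz1; repeat signcase; ring.

Lemma susp_to_tensor_chain :
  meq (mcomp (@dc_d _ TT) susp_to_tensor) (mcomp susp_to_tensor (@dc_d _ TS)).
Proof.
by rewrite tensor_dE susp_dE; case_tensor_gen; case_susp_gen; expand_entries; close_entry.
Qed.

Lemma susp_to_tensor_chi :
  meq (mcomp (@dc_chi _ TT) susp_to_tensor) (mcomp susp_to_tensor (@dc_chi _ TS)).
Proof.
by rewrite tensor_chiE susp_chiE; case_tensor_gen; case_susp_gen; expand_entries; close_entry.
Qed.

Lemma tensor_to_susp_chain :
  meq (mcomp (@dc_d _ TS) tensor_to_susp) (mcomp tensor_to_susp (@dc_d _ TT)).
Proof.
by rewrite tensor_dE susp_dE; case_susp_gen; case_tensor_gen; expand_entries; close_entry.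
Qed.

Lemma tensor_to_susp_chi :
  meq (mcomp (@dc_chi _ TS) tensor_to_susp) (mcomp tensor_to_susp (@dc_chi _ TT)).
Proof.
by rewrite tensor_chiE susp_chiE; case_susp_gen; case_tensor_gen; expand_entries; close_entry.
Qed.

Lemma tensor_to_suspK : meq (mcomp tensor_to_susp susp_to_tensor) (@mid _ _).
Proof. by case_susp_gen; case_susp_gen; expand_entries; close_entry. Qed.

Lemma tensor_htpy_chi :
  meq (madd (mcomp (@dc_chi _ TT) tensor_htpy) (mcomp tensor_htpy (@dc_chi _ TT)))
      (@mzero _ _ _).
Proof. by rewrite tensor_chiE; case_tensor_gen; case_tensor_gen; expand_entries; close_entry. Qed.

Lemma tensor_htpy_d :
  meq (madd (mcomp (@dc_d _ TT) tensor_htpy) (mcomp tensor_htpy (@dc_d _ TT)))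
      (msub (mcomp susp_to_tensor tensor_to_susp) (@mid _ _)).
Proof. by rewrite tensor_dE; case_tensor_gen; case_tensor_gen; expand_entries; close_entry. Qed.

End NegSuspension.

Theorem proposition2p6 (R : comPzRingType) (S : Sdata R) :
  is_Scomplex S ->
  S_htpy_equiv (Sdchi (negsusp S)) (dtensor (Sdchi S) (Sdchi (Ominus1 R))).
Proof.
move=> [hdeg hsq].
exists (@susp_to_tensor _ S), (@tensor_to_susp _ S); split.
- split; [exact: susp_to_tensor_deg | exact: susp_to_tensor_chain | exact: susp_to_tensor_chi].
- split; [exact: tensor_to_susp_deg | exact: tensor_to_susp_chain | exact: tensor_to_susp_chi].
- by exists (@mzero _ _ _); apply: Shtpy_mzero; apply: tensor_to_suspK.
- exists (@tensor_htpy _ S).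
  split; [exact: tensor_htpy_deg | exact: tensor_htpy_chi | exact: tensor_htpy_d].
Qed.
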